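(* Let $G=(V,E)$ be a finite undirected graph, let $k>2$ be an integer, let $m=\lfloor k/2\rfloor$, let $C$ be a legitimate configuration (as defined in the context), and let $s\in S(C)$. Let $u\in V$ with $\mathrm{dist}(u,s)\le m-1$. Then every shortest path $(s=s_0,s_1,\dots,s_{d_u}=u)$ from $s$ to $u$ satisfies the following in $C$: for every clock index $i\in\{d_u+1,\dots,m-1\}$ there exists an integer $a\in\{0,\dots,d_u\}$ such that 1. for all $\ell\in\{0,\dots,a\}$, $(b_{i,s_\ell},c_{i,s_\ell})=(\downarrow,c_{i,s})$; 2. there exists $c'\in\{c_{i,s}-1,c_{i,s}\}$ such that for all $\ell\in\{a+1,\dots,d_u\}$, $(b_{i,s_\ell},c_{i,s_\ell})=(\uparrow,c')$.
   Context: $\mathrm{dist}$ is the graph distance in $G$ and $N(u)$ the neighbourhood of $u$. A configuration $C$ assigns to each node $u$ the values $d_u\in\{0,\dots,k-1\}$, $err_u\in\{0,1\}$, and for each $i\in\{1,\dots,m-1\}$ a clock value $c_{i,u}\in\mathbb{Z}/4\mathbb{Z}$ and an arrow $b_{i,u}\in\{\uparrow,\downarrow\}$. Let $S(C)=\{u\in V: d_u=0\}$. Clock arithmetic is in $\mathbb{Z}/4\mathbb{Z}$. Predicates on a node $u$: - $\mathrm{well\_defined}(u)$: $err_u=0$, $|d_u-d_v|\le 1$ for all $v\in N(u)$, and if $d_u>0$ then some $v\in N(u)$ has $d_v=d_u-1$. - $\mathrm{leader\_down}(u)$: if $d_u=0$ then $b_{i,u}=\downarrow$ for all $i\in\{1,\dots,m-1\}$.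 - $\mathrm{bc\_up}(u,i)$: for every $v\in N(u)$ with $d_v=d_u-1$, $(b_{i,u},b_{i,v},c_{i,v})\in\{(\uparrow,\uparrow,c_{i,u}),(\uparrow,\downarrow,c_{i,u}),(\uparrow,\downarrow,c_{i,u}+1),(\downarrow,\downarrow,c_{i,u})\}$. - $\mathrm{bc\_down}(u,i)$: for every $v\in N(u)$ with $d_v=d_u+1$, $(b_{i,u},b_{i,v},c_{i,v})\in\{(\uparrow,\uparrow,c_{i,u}),(\downarrow,\uparrow,c_{i,u}),(\downarrow,\uparrow,c_{i,u}-1),(\downarrow,\downarrow,c_{i,u})\}$. - $\mathrm{branch\_coherence}(u)$: either $d_u\ge m$, or ($\mathrm{bc\_up}(u,d_u)$ holds, and $\mathrm{bc\_up}(u,i)$ and $\mathrm{bc\_down}(u,i)$ hold for all $i\in\{d_u+1,\dots,m-1\}$). (For $d_u=0$ the condition $\mathrm{bc\_up}(u,0)$ is vacuous.) A configuration $C$ is legitimate if every node $u$ satisfies $\mathrm{well\_defined}(u)$, $\mathrm{leader\_down}(u)$ and $\mathrm{branch\_coherence}(u)$, and any two distinct nodes of $S(C)$ are at distance at least $k$ in $G$. *)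

From mathcomp Require Import all_boot all_order all_algebra.
Set Implicit Arguments. Unset Strict Implicit. Unset Printing Implicit Defensive.
Import GRing.Theory.
Local Open Scope ring_scope.

Inductive arrow := Up | Down.

(* A configuration for parameter k on node set V.
   Clock indices i are natural numbers; only i in {1,...,m-1} are meaningful
   (values at other indices are never inspected). *)
Record config (V : finType) (k : nat) := Config {
  dv  : V -> 'I_k;
  err : V -> bool;                 (* err_u, true = 1 *)
  clk : nat -> V -> 'Z_4;
  arr : nat -> V -> arrow          (* b_{i,u} *)
}.

Section Graph.
Variable V : finType.
Variable e : rel V.   (* adjacency of the undirected graph G; v \in N(u) <-> e u v *)

Definition walk (p : nat -> V) (n : nat) : Prop :=
  forall j, (j < n)%N -> e (p j) (p j.+1).

Definition connects (x y : V) (n : nat) : Prop :=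
  exists p : nat -> V, [/\ p 0%N = x, p n = y & walk p n].

Definition distance (x y : V) (n : nat) : Prop :=
  connects x y n /\ forall n', connects x y n' -> (n <= n')%N.

(* dist(x,y) >= n (also holds when x,y are disconnected, dist = +oo) *)
Definition dist_ge (x y : V) (n : nat) : Prop :=
  forall n', connects x y n' -> (n <= n')%N.

Variable k : nat.
Definition mm : nat := k./2.
Variable C : config V k.

Definition d (u : V) : nat := dv C u.

Definition well_defined (u : V) : Prop :=
  [/\ err C u = false,
      (forall v, e u v -> (d u <= d v + 1)%N /\ (d v <= d u + 1)%N)
    & (0 < d u)%N -> exists v, e u v /\ (d v + 1 = d u)%N].

Definition leader_down (u : V) : Prop :=
  d u = 0%N -> forall i, (1 <= i <= mm - 1)%N -> arr C i u = Down.

Definition bc_up (u : V) (i : nat) : Prop :=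
  forall v, e u v -> (d v + 1 = d u)%N ->
    let cu := clk C i u in
    let t := (arr C i u, arr C i v, clk C i v) in
    t = (Up, Up, cu) \/ t = (Up, Down, cu) \/ t = (Up, Down, cu + 1)
    \/ t = (Down, Down, cu).

Definition bc_down (u : V) (i : nat) : Prop :=
  forall v, e u v -> d v = (d u + 1)%N ->
    let cu := clk C i u in
    let t := (arr C i u, arr C i v, clk C i v) in
    t = (Up, Up, cu) \/ t = (Down, Up, cu) \/ t = (Down, Up, cu - 1)
    \/ t = (Down, Down, cu).

Definition branch_coherence (u : V) : Prop :=
  (mm <= d u)%N \/
  (bc_up u (d u) /\
   forall i, (d u + 1 <= i <= mm - 1)%N -> bc_up u i /\ bc_down u i).

Definition in_S (u : V) : Prop := d u = 0%N.

Definition legitimate : Prop :=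
  (forall u, [/\ well_defined u, leader_down u & branch_coherence u]) /\
  (forall s1 s2, in_S s1 -> in_S s2 -> s1 <> s2 -> dist_ge s1 s2 k).

End Graph.

From mathcomp Require Import all_boot all_order all_algebra.
From mathcomp Require Import zify.
Set Implicit Arguments. Unset Strict Implicit. Unset Printing Implicit Defensive.
Import GRing.Theory.
Local Open Scope ring_scope.

(* In a legitimate configuration d is the distance to S as long as it stays
   below k/2: it is 1-Lipschitz along edges and vanishes on S, and every node
   descends along decreasing d to some s' in S, which must be s itself because
   distinct nodes of S are k apart.  Hence a shortest path from s is a chain of
   parent links, and branch coherence constrains each consecutive pair of
   (arrow, clock) values.  The only transitions allowed from a Down node are to
   Down with the same clock or to Up with the same clock or one less, and from an
   Up node only to Up with the same clock, which gives the Down-then-Up shape. *)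

Section Walks.
Variables (V : finType) (e : rel V).

Lemma connects_refl x : connects e x x 0.
Proof. by exists (fun _ => x). Qed.

Lemma connects_edge x y : e x y -> connects e x y 1.
Proof.
move=> exy; exists (fun j => if j == 0%N then x else y); split=> // j.
by rewrite ltnS leqn0 => /eqP ->.
Qed.

Lemma connects_cat x y z a b :
  connects e x y a -> connects e y z b -> connects e x z (a + b).
Proof.
move=> [p [p0 pa wp]] [q [q0 qb wq]].
exists (fun j => if (j <= a)%N then p j else q (j - a)%N); split.
- by rewrite leq0n.
- case: ifP => hab; last by rewrite addKn.
  have b0 : b = 0%N by lia.
  by rewrite b0 addn0 pa -q0 -qb b0.
- move=> j hj; case: (ltngtP j a) => [lt_ja|lt_aj|ja]; last subst j.
  + exact: wp.
  + by rewrite subSn ?(ltnW lt_aj) //; apply: wq; lia.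
  + by rewrite pa -q0 subSnn; apply: wq; lia.
Qed.

Lemma connects_sym x y n : symmetric e -> connects e x y n -> connects e y x n.
Proof.
move=> e_sym [p [p0 pn wp]]; exists (fun j => p (n - j)%N); split.
- by rewrite subn0.
- by rewrite subnn.
- by move=> j hj; rewrite e_sym -(subnSK hj); apply: wp; lia.
Qed.

Lemma connects_walk_prefix p n l :
  walk e p n -> (l <= n)%N -> connects e (p 0%N) (p l) l.
Proof. by move=> wp hl; exists p; split=> // j hj; apply: wp; lia. Qed.

Lemma connects_walk_suffix p n l :
  walk e p n -> (l <= n)%N -> connects e (p l) (p n) (n - l).
Proof.
move=> wp hl; exists (fun j => p (j + l)%N); split=> //; first by rewrite subnK.
by move=> j hj; rewrite addSn; apply: wp; lia.
Qed.

Lemma distance_walk_prefix p n l :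
  distance e (p 0%N) (p n) n -> walk e p n -> (l <= n)%N ->
  distance e (p 0%N) (p l) l.
Proof.
move=> [_ shortest] wp hl; split; first exact: connects_walk_prefix wp hl.
move=> j cj; have := shortest _ (connects_cat cj (connects_walk_suffix wp hl)).
lia.
Qed.

End Walks.

Definition bc_up_step (bu bv : arrow) (cu cv : 'Z_4) : Prop :=
  let t := (bu, bv, cv) in
  t = (Up, Up, cu) \/ t = (Up, Down, cu) \/ t = (Up, Down, cu + 1)
  \/ t = (Down, Down, cu).

Lemma bc_up_step_Up bu cu cv : bc_up_step bu Up cu cv -> bu = Up /\ cu = cv.
Proof. by case=> [[-> ->]|[|[]]]. Qed.

Lemma bc_up_step_Down bu cu cv :
  bc_up_step bu Down cu cv ->
  (bu = Down /\ cu = cv) \/ (bu = Up /\ (cu = cv - 1 \/ cu = cv)).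
Proof.
case=> [//|[[-> ->]|[[-> ->]|[-> ->]]]]; [by right; split=> //; right | | by left].
by right; split=> //; left; rewrite addrK.
Qed.

Definition down_up_profile (b : nat -> arrow) (c : nat -> 'Z_4) (n : nat) :=
  exists a, (a <= n)%N /\
    (forall l, (l <= a)%N -> b l = Down /\ c l = c 0%N) /\
    exists c', (c' = c 0%N - 1 \/ c' = c 0%N) /\
      (forall l, (a + 1 <= l <= n)%N -> b l = Up /\ c l = c').

Lemma down_up_profile_of_steps (b : nat -> arrow) (c : nat -> 'Z_4) n :
  b 0%N = Down ->
  (forall l, (l < n)%N -> bc_up_step (b l.+1) (b l) (c l.+1) (c l)) ->
  down_up_profile b c n.
Proof.
move=> b0; elim: n => [|n IH] steps.
  exists 0%N; split=> //; split; first by move=> [].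
  by exists (c 0%N); split; [right | lia].
have [a [le_an [down [c' [hc' up]]]]] := IH (fun l hl => steps l (ltnW hl)).
have := steps n (ltnSn n); case: (ltnP a n) => [lt_an|le_na].
  have [-> ->] := up n ltac:(lia); move=> /bc_up_step_Up [bn1 cn1].
  exists a; split; [lia | split=> //; exists c'; split=> // l hl].
  by case: (ltnP l n.+1) => hl'; [apply: up; lia | have -> : l = n.+1 by lia].
have an : a = n by lia.
subst a.
have [-> ->] := down n (leqnn n); case/bc_up_step_Down => [[bn1 cn1]|[bn1 cn1]].
  exists n.+1; split=> //; split; last by exists (c 0%N); split; [right | lia].
  by move=> l hl; case: (ltnP l n.+1) => hl'; [apply: down | have -> : l = n.+1 by lia].
exists n; split=> //; split=> //; exists (c n.+1); split=> // l hl.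
by have -> : l = n.+1 by lia.
Qed.

Section Legitimate.
Variables (V : finType) (e : rel V) (k : nat) (C : config V k).
Hypotheses (e_sym : symmetric e) (HC : legitimate e C).

Lemma d_edge_le u v : e u v -> (d C v <= d C u + 1)%N.
Proof. by have [[_ lip _] _ _] := HC.1 u; move=> /lip []. Qed.

Lemma d_walk_le p n : walk e p n -> (d C (p n) <= d C (p 0%N) + n)%N.
Proof.
elim: n => [|n IH] wp; first by rewrite addn0.
have := d_edge_le (wp n (ltnSn n)); have := IH (fun j hj => wp j (ltnW hj)).
lia.
Qed.

Lemma connects_from_S v : exists s, in_S C s /\ connects e s v (d C v).
Proof.
move: {-1}(d C v) (erefl (d C v)) => t; elim: t v => [|t IH] v dv.
  by exists v; split; [exact: dv | exact: connects_refl].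
have [[_ _ parent] _ _] := HC.1 v.
have [w [evw dw]] := parent ltac:(lia).
have [s [Ss csw]] := IH w ltac:(lia).
exists s; split=> //; rewrite -addn1; apply: connects_cat csw _.
by apply: connects_edge; rewrite e_sym.
Qed.

Lemma d_eq_distance_from_S s v l :
  in_S C s -> distance e s v l -> (l + l <= k)%N -> d C v = l.
Proof.
move=> Ss [csv shortest] hlk.
have le_dl : (d C v <= l)%N.
  by case: csv => p [p0 pl wp]; have := d_walk_le wp; rewrite p0 pl Ss.
have [s' [Ss' cs'v]] := connects_from_S v.
case: (eqVneq s s') cs'v => [<- /shortest | neq cs'v]; first lia.
have := HC.2 s s' Ss Ss' (elimN eqP neq) _
  (connects_cat csv (connects_sym e_sym cs'v)).
lia.
Qed.

Lemma bc_up_of_parent u v i :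
  e u v -> (d C v + 1 = d C u)%N -> (d C u < i <= mm k - 1)%N ->
  bc_up_step (arr C i u) (arr C i v) (clk C i u) (clk C i v).
Proof.
move=> euv dvu /andP [lo hi]; have [_ _ [|[_ bc]]] := HC.1 u; first lia.
by apply: (bc i _).1 => //; lia.
Qed.

End Legitimate.

Theorem lemma3 (V : finType) (e : rel V)
  (e_sym : symmetric e) (e_irr : irreflexive e)
  (k : nat) (hk : (2 < k)%N) (C : config V k)
  (HC : legitimate e C)
  (s : V) (Hs : in_S C s)
  (u : V) (n : nat) (Hdist : distance e s u n) (Hn : (n <= mm k - 1)%N)
  (p : nat -> V) (Hp0 : p 0%N = s) (Hpn : p n = u) (Hwalk : walk e p n) :
  forall i, (d C u + 1 <= i <= mm k - 1)%N ->
  exists a, (a <= d C u)%N /\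
    (forall l, (l <= a)%N -> arr C i (p l) = Down /\ clk C i (p l) = clk C i s) /\
    exists c', (c' = clk C i s - 1 \/ c' = clk C i s) /\
      (forall l, (a + 1 <= l <= d C u)%N ->
         arr C i (p l) = Up /\ clk C i (p l) = c').
Proof.
subst s u => i /andP [lo hi].
have dp l : (l <= n)%N -> d C (p l) = l.
  move=> hl; apply: (d_eq_distance_from_S e_sym HC Hs).
    exact: distance_walk_prefix Hdist Hwalk hl.
  rewrite /mm in Hn; lia.
rewrite dp // in lo *.
apply: down_up_profile_of_steps => [|l hl].
  by have [_ leader _] := HC.1 (p 0%N); apply: leader => //; lia.
apply: (bc_up_of_parent HC).
- by rewrite e_sym; apply: Hwalk.
- by rewrite !dp //; lia.
- by rewrite dp //; apply/andP; split; lia.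
Qed.
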